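(* Let $A$ be a setoid, $B$ a setoid family over $A$ and $(C,a_C)$ a $P_B$-algebra. For every $F:\mathsf{RFam}$, \[ \mathsf{cmprh}\,F\approx\big(P_B\,(a_C\circ(\mathsf{cmprh}\,F))\big)\circ\mathsf{us}. \] Hence $a_C\circ(\mathsf{cmprh}\,F):W\Rightarrow C$ is an algebra morphism, i.e. $(a_C\circ(\mathsf{cmprh}\,F))\circ\mathsf s\approx a_C\circ P_B(a_C\circ(\mathsf{cmprh}\,F))$.
   Context: Setting: intensional Martin-Löf type theory with $\Pi$-types, record types and a universe $\mathsf U$ closed under $\Pi$ and containing intensional $\Sigma$-types, identity types, unit type, W-types and dependent W-types; propositions-as-types. For a W-type with constructor $\mathsf{sup}$, $\mathsf n,\mathsf b$ are node and branch functions. $\mathsf{DW}_{I,X,Y,d}:I\to\mathsf U$ denotes the dependent W-type: the inductive family with constructor $\mathsf{dsup}\,i\,x\,f:\mathsf{DW}\,i$ for $x:X\,i$ and $f:\prod_{y:Y\,i\,x}\mathsf{DW}(d\,i\,x\,y)$. A setoid $X$: type $X_0:\mathsf U$ with relation $\approx_X$ and proofs of reflexivity, symmetry, transitivity; $x:X$ means $x:X_0$. Extensional function $f:X\Rightarrow Y$: $f_0:X_0\to Y_0$ with a proof that it preserves $\approx$; $X\Rightarrow Y$ is a setoid with pointwise equality; $\circ$ is composition. A setoid family $B$ over setoid $A$: setoids $B\,a$ and transports $B_\alpha:B\,a\Rightarrow B\,a'$ for $\alpha:a\approx_Aa'$, functorial up to $\approx$, with $B_\alpha\approx B_{\alpha'}$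 for all $\alpha,\alpha'$. Write $b\approx_\alpha b'$ for $B_\alpha b\approx b'$. $P_BX$: setoid with underlying type $\sum_{a:A}(B\,a\Rightarrow X)$ and $(a,k)\approx(a',k'):=\sum_{\alpha:a\approx a'}k\approx k'\circ B_\alpha$; $P_Bf(a,k):=(a,f\circ k)$. A $P_B$-algebra is a setoid $C$ with extensional $a_C:P_BC\Rightarrow C$. $W$: with $A_0,B_0$ underlying types and $\mathsf W:=\mathsf W(A_0,B_0)$, $\approx^Bw\,w':=\mathsf{DW}_{I,X,Y,d}(w,w')$ with $I:=\mathsf W\times\mathsf W$, $X(w,w'):=\mathsf nw\approx_A\mathsf nw'$, $Y(w,w')\alpha:=\sum_{b,b'}b\approx_\alpha b'$, $d(w,w')\alpha(b,b',\beta):=(\mathsf bwb,\mathsf bw'b')$. $W$: underlying type $\sum_{w:\mathsf W}\approx^Bw\,w$, $(w,\_)\approx_W(w',\_):=\approx^Bw\,w'$. $\mathsf n$, $\mathsf b$ induce extensional $\mathsf n:W\Rightarrow A$ and $\mathsf b\,w:B(\mathsf nw)\Rightarrow W$; for $\gamma:w\approx_Ww'$, $\mathsf n^\ast\gamma$ is extensionality of $\mathsf n$ applied to $\gamma$. $\mathsf s:P_BW\Rightarrow W$ sends $(a,f)$ to $\mathsf{sup}\,a\,f_0$ ($f_0$ underlying function of $f$); $\mathsf{us}:W\Rightarrow P_BW$ is $w\mapsto(\mathsf n\,w,\mathsf b\,w)$, inverse to $\mathsf s$. $\mathsf{ImS}\,w$ (for $w:W$): setoid with underlying type $B_0(\mathsf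 nw)$ and $b\approx b':=\mathsf bwb\approx_W\mathsf bwb'$; transport $\mathsf{ImS}_\gamma s:=B_{\mathsf n^\ast\gamma}s$. $e_w:B(\mathsf nw)\Rightarrow\mathsf{ImS}\,w$ has identity underlying function; $m_w:\mathsf{ImS}\,w\Rightarrow W$ has the underlying function of $\mathsf b\,w$. A family $F:\prod_{s:\mathsf{ImS}w}\mathsf{ImS}(\mathsf bws)\Rightarrow C$ is coherent if $F\,s\approx(F\,s')\circ\mathsf{ImS}_\sigma$ for all $\sigma:s\approx s'$; $\mathsf{CohMaps}\,w$ is the setoid of coherent families with pointwise equality. For $F:\mathsf{CohMaps}\,w$, $\mathsf{recst}\,w\,F:\mathsf{ImS}\,w\Rightarrow C$ is the extensional function $s\mapsto a_C(\mathsf n(\mathsf bws),(F\,s)\circ e_{\mathsf bws})$. For $k:\mathsf{ImS}\,w\Rightarrow C$, $\mathsf{RecDef}\,w\,k:=\mathsf{DW}_{I',X',Y',d'}(w,k)$ with $I':=\sum_{w:W}(\mathsf{ImS}w\Rightarrow C)$, $X'(w,k):=\sum_{F:\mathsf{CohMaps}w}k\approx\mathsf{recst}\,w\,F$, $Y'(w,k)(F,\_):=$ underlying type of $\mathsf{ImS}\,w$, $d'(w,k)(F,\_)s:=(\mathsf bws,F\,s)$. $\mathsf{RFam}$: setoid with underlying type $\sum_{F:\prod_{w:W}\mathsf{ImS}w\Rightarrow C}\prod_w\mathsf{RecDef}\,w\,(F\,w)$ and pointwise equality of first components; elements written $F$ with proof implicit. For $F:\mathsf{RFam}$, $\mathsf{cmprh}\,F:W\Rightarrow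 P_BC$ is the extensional function $w\mapsto(\mathsf n\,w,(F\,w)\circ e_w)$. *)

Record setoid := Setoid {
  car :> Type;
  eqv : car -> car -> Type;
  srefl : forall x, eqv x x;
  ssym : forall x y, eqv x y -> eqv y x;
  strans : forall x y z, eqv x y -> eqv y z -> eqv x z }.
Arguments eqv {s} _ _.
Arguments srefl {s} x.
Arguments ssym {s x y} _.
Arguments strans {s x y z} _ _.

Record extfun (X Y : setoid) := ExtFun {
  ap :> car X -> car Y;
  apext : forall x x', eqv x x' -> eqv (ap x) (ap x') }.
Arguments ExtFun {X Y} _ _.
Arguments ap {X Y} _ _ : rename.
Arguments apext {X Y} f {x x'} _ : rename.

Definition extfunS (X Y : setoid) : setoid.
Proof.
  refine {| car := extfun X Y; eqv := fun f g => forall x, eqv (f x) (g x) |}.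
  - intros f x; apply srefl.
  - intros f g p x; exact (ssym (p x)).
  - intros f g h p q x; exact (strans (p x) (q x)).
Defined.

Definition comp {X Y Z : setoid} (g : extfun Y Z) (f : extfun X Y) : extfun X Z :=
  ExtFun (fun x => g (f x)) (fun x x' e => apext g (apext f e)).

Record sfam (A : setoid) := SFam {
  fam :> car A -> setoid;
  tr : forall a a', eqv a a' -> extfun (fam a) (fam a');
  tr_refl : forall a (b : fam a), eqv (tr a a (srefl a) b) b;
  tr_trans : forall a a' a'' (al : eqv a a') (be : eqv a' a'') (b : fam a),
      eqv (tr a' a'' be (tr a a' al b)) (tr a a'' (strans al be) b);
  tr_irr : forall a a' (al al' : eqv a a') (b : fam a),
      eqv (tr a a' al b) (tr a a' al' b) }.
Arguments fam {A} s a.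
Arguments tr {A} s {a a'} _.
Arguments tr_refl {A} s {a} b.
Arguments tr_trans {A} s {a a' a''} al be b.
Arguments tr_irr {A} s {a a'} al al' b.

Inductive Wty (A0 : Type) (B0 : A0 -> Type) : Type :=
  sup : forall a, (B0 a -> Wty A0 B0) -> Wty A0 B0.
Arguments sup {A0 B0} a f.

Definition wn {A0 B0} (w : @Wty A0 B0) : A0 := match w with sup a _ => a end.
Definition wb {A0 B0} (w : @Wty A0 B0) : B0 (wn w) -> Wty A0 B0 :=
  match w return B0 (wn w) -> Wty A0 B0 with sup _ f => f end.

Inductive DW (I : Type) (X : I -> Type) (Y : forall i, X i -> Type)
    (d : forall i (x : X i), Y i x -> I) : I -> Type :=
  dsup : forall i (x : X i), (forall y : Y i x, DW I X Y d (d i x y)) -> DW I X Y d i.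
Arguments DW {I} X Y d _.
Arguments dsup {I X Y d} i x f.

Definition dx {I X Y d} {i : I} (e : @DW I X Y d i) : X i :=
  match e in DW _ _ _ j return X j with dsup _ x _ => x end.
Definition df {I X Y d} {i : I} (e : @DW I X Y d i) :
    forall y : Y i (dx e), DW X Y d (d i (dx e) y) :=
  match e as e0 in DW _ _ _ j return forall y : Y j (dx e0), DW X Y d (d j (dx e0) y)
  with dsup _ x f => f end.

Section Poly.
Variables (A : setoid) (B : sfam A).

Definition tr_cancel a a' (al : eqv a a') (be : eqv a' a) (b : B a') :
  eqv (tr B al (tr B be b)) b.
Proof.
  eapply strans; [apply tr_trans|].
  eapply strans; [apply (tr_irr B _ (srefl a'))|]. apply tr_refl.
Defined.

Definition tr_inv a a' (al : eqv a a') (b : B a') (b' : B a) :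
  eqv (tr B (ssym al) b) b' -> eqv (tr B al b') b.
Proof.
  intro h. exact (strans (apext (tr B al) (ssym h)) (tr_cancel _ _ al (ssym al) b)).
Defined.

Definition tr_id a (al : eqv a a) (b : B a) : eqv (tr B al b) b :=
  strans (tr_irr B al (srefl a) b) (tr_refl B b).

Definition PB (X : setoid) : setoid.
Proof.
  refine {| car := {a : car A & extfun (B a) X};
            eqv := fun p q => {al : eqv (projT1 p) (projT1 q) &
                     forall b, eqv (projT2 p b) (projT2 q (tr B al b))} |}.
  - intros [a k]. exists (srefl a). intro b. apply (apext k). apply ssym, tr_refl.
  - intros [a k] [a' k'] [al h]. exists (ssym al). intro b'. simpl in *.
    eapply strans; [| apply ssym, h]. apply (apext k'). apply ssym. apply tr_cancel.
  - intros [a k] [a' k'] [a'' k''] [al h] [al' h']. exists (strans al al'). intro b.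
    simpl in *.
    eapply strans; [apply h|]. eapply strans; [apply h'|]. apply (apext k''). apply tr_trans.
Defined.

Definition PBf {X Y : setoid} (f : extfun X Y) : extfun (PB X) (PB Y).
Proof.
  refine (@ExtFun (PB X) (PB Y) (fun p : {a : car A & extfun (B a) X} =>
    existT (fun a => extfun (B a) Y) (projT1 p) (comp f (projT2 p))) _).
  intros [a k] [a' k'] [al h]. exists al. intro b. simpl. apply (apext f), h.
Defined.

Definition W0 : Type := Wty (car A) (fun a => car (B a)).
Definition BX (p : W0 * W0) : Type := eqv (wn (fst p)) (wn (snd p)).
Definition BY (p : W0 * W0) (al : BX p) : Type :=
  {b : car (B (wn (fst p))) & {b' : car (B (wn (snd p))) & eqv (tr B al b) b'}}.
Definition Bd (p : W0 * W0) (al : BX p) (y : BY p al) : W0 * W0 :=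
  (wb (fst p) (projT1 y), wb (snd p) (projT1 (projT2 y))).
Definition Beq (w w' : W0) : Type := DW BX BY Bd (w, w').

Fixpoint Beq_symD (p : W0 * W0) (e : DW BX BY Bd p) {struct e} :
  DW BX BY Bd (snd p, fst p).
Proof.
  destruct e as [q al f].
  refine (dsup (snd q, fst q) (ssym al) (fun y => _)).
  destruct y as [b [b' h]].
  exact (Beq_symD _ (f (existT _ b' (existT _ b (tr_inv _ _ al b b' h))))).
Defined.

Fixpoint Beq_transD (p : W0 * W0) (e : DW BX BY Bd p) {struct e} :
  forall w'', DW BX BY Bd (snd p, w'') -> DW BX BY Bd (fst p, w'').
Proof.
  destruct e as [q al f]. intros w'' e'.
  refine (dsup (fst q, w'') (strans al (dx e')) (fun y => _)).
  destruct y as [b [b'' h]].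
  exact (Beq_transD _ (f (existT _ b (existT _ (tr B al b) (srefl _)))) (wb w'' b'')
          (df e' (existT _ (tr B al b) (existT _ b'' (strans (tr_trans B al (dx e') b) h))))).
Defined.

#[projections(primitive)]
Record Wel := mkW { wel : W0; wrefl : Beq wel wel }.

Definition W : setoid :=
  {| car := Wel; eqv := fun x y => Beq (wel x) (wel y);
     srefl := wrefl;
     ssym := fun x y e => Beq_symD (wel x, wel y) e;
     strans := fun x y z e e' => Beq_transD (wel x, wel y) e (wel z) e' |}.

Definition nW : extfun W A :=
  @ExtFun W A (fun x : Wel => wn (wel x)) (fun x y (e : Beq (wel x) (wel y)) => dx e).

Definition bW (x : Wel) (b : car (B (wn (wel x)))) : Wel :=
  mkW (wb (wel x) b)
      (df (wrefl x) (existT _ b (existT _ b (tr_id _ (dx (wrefl x)) b)))).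

Definition bWf (x : Wel) : extfun (B (nW x)) W :=
  @ExtFun (B (nW x)) W (bW x) (fun b b' e =>
    df (wrefl x) (existT _ b (existT _ b' (strans (tr_id _ (dx (wrefl x)) b) e)))).

Definition sW : extfun (PB W) W.
Proof.
  refine (@ExtFun (PB W) W (fun p : {a : car A & extfun (B a) W} => mkW (sup (projT1 p) (fun b => wel (projT2 p b)))
     (dsup (sup (projT1 p) (fun b => wel (projT2 p b)), sup (projT1 p) (fun b => wel (projT2 p b)))
        (srefl (projT1 p))
        (fun y => apext (projT2 p) (strans (ssym (tr_refl B (projT1 y))) (projT2 (projT2 y))))))
     _).
  intros [a k] [a' k'] [al h].
  change (Beq (sup a (fun b => wel (k b))) (sup a' (fun b => wel (k' b)))).
  refine (dsup (sup a (fun b => wel (k b)), sup a' (fun b => wel (k' b))) al (fun y => _)).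
  destruct y as [b [b' hb]].
  exact (@strans W _ _ _ (h b) (apext k' hb)).
Defined.

Definition usW : extfun W (PB W).
Proof.
  refine (@ExtFun W (PB W) (fun x : Wel => existT (fun a => extfun (B a) W) (wn (wel x)) (bWf x)) _).
  intros x y e. exists (dx (e : Beq (wel x) (wel y))). intro b.
  exact (df (e : Beq (wel x) (wel y)) (existT _ b (existT _ (tr B (dx e) b) (srefl _)))).
Defined.

Definition ImS (x : Wel) : setoid :=
  {| car := car (B (wn (wel x)));
     eqv := fun s s' => @eqv W (bW x s) (bW x s');
     srefl := fun s => @srefl W (bW x s);
     ssym := fun s s' e => @ssym W _ _ e;
     strans := fun s s' s'' e e' => @strans W _ _ _ e e' |}.

Definition eS (x : Wel) : extfun (B (nW x)) (ImS x) :=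
  @ExtFun (B (nW x)) (ImS x) (fun b => b) (fun b b' e => apext (bWf x) e).

Definition mS (x : Wel) : extfun (ImS x) W :=
  @ExtFun (ImS x) W (bW x) (fun s s' e => e).

Definition trS (x y : Wel) (g : @eqv W x y) : extfun (ImS x) (ImS y).
Proof.
  set (cS := fun s : car (B (wn (wel x))) =>
     df (g : Beq (wel x) (wel y))
        (existT _ s (existT _ (tr B (dx (g : Beq (wel x) (wel y))) s) (srefl _)))
     : @eqv W (bW x s) (bW y (tr B (apext nW g) s))).
  refine (@ExtFun (ImS x) (ImS y) (fun s => tr B (apext nW g) s) _).
  intros s s' sg. exact (@strans W _ _ _ (@ssym W _ _ (cS s)) (@strans W _ _ _ sg (cS s'))).
Defined.

Section Alg.
Variables (C : setoid) (aC : extfun (PB C) C).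

Definition coherent (x : Wel) (F : forall s : car (ImS x), extfun (ImS (bW x s)) C) : Type :=
  forall s s' (sg : @eqv (ImS x) s s'),
    @eqv (extfunS (ImS (bW x s)) C) (F s) (comp (F s') (trS (bW x s) (bW x s') sg)).

Definition CohMaps (x : Wel) : setoid.
Proof.
  refine {| car := {F : forall s : car (ImS x), extfun (ImS (bW x s)) C & coherent x F};
            eqv := fun F G => forall s, @eqv (extfunS _ C) (projT1 F s) (projT1 G s) |}.
  - intros F s t. apply srefl.
  - intros F G p s t. exact (ssym (p s t)).
  - intros F G H p q s t. exact (strans (p s t) (q s t)).
Defined.

Definition recst (x : Wel) (F : car (CohMaps x)) : extfun (ImS x) C.
Proof.
  refine (@ExtFun (ImS x) C (fun s => aC (existT _ (nW (bW x s)) (comp (projT1 F s) (eS (bW x s))))) _).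
  intros s s' sg. apply (apext aC).
  exists (apext nW (sg : @eqv W (bW x s) (bW x s'))). intro b.
  exact (projT2 F s s' sg b).
Defined.

Definition Ip : Type := {x : Wel & extfun (ImS x) C}.
Definition Xp (i : Ip) : Type :=
  {F : car (CohMaps (projT1 i)) & @eqv (extfunS (ImS (projT1 i)) C) (projT2 i) (recst _ F)}.
Definition Yp (i : Ip) (xF : Xp i) : Type := car (ImS (projT1 i)).
Definition dp (i : Ip) (xF : Xp i) (s : Yp i xF) : Ip :=
  existT _ (bW (projT1 i) s) (projT1 (projT1 xF) s).
Definition RecDef (x : Wel) (k : extfun (ImS x) C) : Type :=
  DW Xp Yp dp (existT _ x k).

Definition RFam : setoid.
Proof.
  refine {| car := {F : forall x : Wel, extfun (ImS x) C & forall x, RecDef x (F x)};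
            eqv := fun F G => forall x, @eqv (extfunS _ C) (projT1 F x) (projT1 G x) |}.
  - intros F x s. apply srefl.
  - intros F G p x s. exact (ssym (p x s)).
  - intros F G H p q x s. exact (strans (p x s) (q x s)).
Defined.

(* two recursive families along W-equal trees agree (needed for cmprh to be extensional) *)
Fixpoint rec_coh (p : W0 * W0) (e : DW BX BY Bd p) {struct e} :
  forall (hw : Beq (fst p) (fst p)) (hw' : Beq (snd p) (snd p))
    (k : extfun (ImS (mkW (fst p) hw)) C) (k' : extfun (ImS (mkW (snd p) hw')) C),
    RecDef _ k -> RecDef _ k' ->
    forall s : car (B (wn (fst p))), eqv (k s) (k' (tr B (dx e) s)).
Proof.
  destruct e as [q al f]. intros hw hw' k k' r r' s. cbn [dx].
  eapply strans; [apply (projT2 (dx r) s)|].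
  eapply strans; [| apply ssym; apply (projT2 (dx r') (tr B al s))].
  cbn. apply (apext aC).
  set (gs := f (existT _ s (existT _ (tr B al s) (srefl _)))).
  exists (dx gs). intro b.
  exact (rec_coh _ gs (wrefl (bW (mkW (fst q) hw) s)) (wrefl (bW (mkW (snd q) hw') (tr B al s)))
           _ _ (df r s) (df r' (tr B al s)) b).
Defined.

Definition cmprh (F : car RFam) : extfun W (PB C).
Proof.
  refine (@ExtFun W (PB C) (fun x : Wel => existT (fun a => extfun (B a) C) (wn (wel x)) (comp (projT1 F x) (eS x))) _).
  intros x y g. exists (apext nW g). intro b.
  exact (rec_coh (wel x, wel y) g (wrefl x) (wrefl y) (projT1 F x) (projT1 F y)
           (projT2 F x) (projT2 F y) b).
Defined.

End Alg.
End Poly.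

Arguments PB {A} B X.
Arguments PBf {A} B {X Y} f.
Arguments W {A} B.
Arguments nW {A} B.
Arguments sW {A} B.
Arguments usW {A} B.
Arguments ImS {A} B x.
Arguments CohMaps {A} B {C} x.
Arguments recst {A} B {C} aC x F.
Arguments RecDef {A} B {C} aC x k.
Arguments RFam {A} B {C} aC.
Arguments cmprh {A B C aC} F.


(* Proof idea: the recursion proof attached to [F x] says that [F x s] is
   [a_C] applied to the node of [b x s] and to a coherent family which, by
   uniqueness of recursively defined families along W-equal trees
   ([rec_coh]), agrees with [F (b x s)]; this is the first equation.  Since
   [us] is inverse to [s], the first equation precomposed with [s] gives the
   morphism property. *)

Section Structure.
Variables (A : setoid) (B : sfam A).

Lemma usW_sW (p : car (PB B (W B))) : @eqv (PB B (W B)) (usW B (sW B p)) p.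
Proof.
  destruct p as [a k]. exists (srefl a). intro b. cbn.
  exact (apext k (ssym (tr_refl B b))).
Defined.

Section Algebra.
Variables (C : setoid) (aC : extfun (PB B C) C).

Lemma algebra_morphism_of_us (h : extfun (W B) (PB B C)) :
  @eqv (extfunS (W B) (PB B C)) h (comp (PBf B (comp aC h)) (usW B)) ->
  @eqv (extfunS (PB B (W B)) C)
    (comp (comp aC h) (sW B)) (comp aC (PBf B (comp aC h))).
Proof.
  intros h_us p. cbn [comp ap]. apply (apext aC).
  eapply strans; [apply h_us|].
  exact (apext (PBf B (comp aC h)) (usW_sW p)).
Defined.

Lemma RFam_unfold (F : car (RFam B aC)) (x : Wel A B) (s : car (ImS B x)) :
  eqv (projT1 F x s) (aC (cmprh F (bW A B x s))).
Proof.
  set (r := projT2 F x).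
  eapply strans; [exact (projT2 (dx r) s)|].
  apply (apext aC). exists (dx (wrefl A B (bW A B x s))).
  exact (rec_coh A B C aC (wel A B (bW A B x s), wel A B (bW A B x s))
           (wrefl A B (bW A B x s)) (wrefl A B (bW A B x s)) (wrefl A B (bW A B x s))
           _ _ (df r s) (projT2 F (bW A B x s))).
Defined.

Lemma cmprh_us (F : car (RFam B aC)) :
  @eqv (extfunS (W B) (PB B C)) (cmprh F) (comp (PBf B (comp aC (cmprh F))) (usW B)).
Proof.
  intro x. exists (srefl (wn (wel A B x))). intro b.
  exact (strans (RFam_unfold F x b)
           (apext (comp aC (cmprh F)) (apext (bWf A B x) (ssym (tr_refl B b))))).
Defined.

End Algebra.
End Structure.

Theorem corollary3p16 (A : setoid) (B : sfam A) (C : setoid)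
    (aC : extfun (PB B C) C) (F : car (RFam B aC)) :
  (@eqv (extfunS (W B) (PB B C))
     (cmprh F) (comp (PBf B (comp aC (cmprh F))) (usW B)))
  * (@eqv (extfunS (PB B (W B)) C)
     (comp (comp aC (cmprh F)) (sW B)) (comp aC (PBf B (comp aC (cmprh F))))).
Proof.
  split.
  - exact (cmprh_us A B C aC F).
  - exact (algebra_morphism_of_us A B C aC _ (cmprh_us A B C aC F)).
Qed.
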